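(* For all integers $h \ge 2$ and $k \ge 3$, $hk \in \mathcal{R}_{\mathbf{Z}}(h,k)$.
   Context: For a positive integer $h$ and a finite set $A$ of integers, $hA$ denotes the set of all sums $a_1+\cdots+a_h$ with $a_1,\ldots,a_h \in A$ (not necessarily distinct). The sumset size set is $\mathcal{R}_{\mathbf{Z}}(h,k) = \{ |hA| : A \subseteq \mathbf{Z},\ |A| = k\}$. *)

From mathcomp Require Import all_boot all_order all_algebra.
Set Implicit Arguments. Unset Strict Implicit. Unset Printing Implicit Defensive.
Import GRing.Theory Num.Theory.
Local Open Scope ring_scope.

(* A finite set of integers is represented by a duplicate-free list [A : seq int]. *)

Fixpoint hfold (A : seq int) (h : nat) : seq int :=
  match h with
  | O => [:: 0]
  | S h' => [seq a + s | a <- A, s <- hfold A h']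
  end.

Definition sumset (h : nat) (A : seq int) : seq int := undup (hfold A h).

(* Membership of n in R_Z(h,k) = { |hA| : A subset Z, |A| = k }. *)
Definition in_RZ (h k n : nat) : Prop :=
  exists A : seq int, uniq A /\ size A = k /\ size (sumset h A) = n.

From mathcomp Require Import all_boot all_order all_algebra.
From mathcomp Require Import zify.
Set Implicit Arguments. Unset Strict Implicit. Unset Printing Implicit Defensive.
Import GRing.Theory Num.Theory.

(* Take A = {0, ..., k-2} u {k}.  Adding {0, ..., m-2} u {m} to it gives
   {0, ..., k+m-2} u {k+m} as soon as k >= 3 (so that the two intervals
   overlap enough to fill the slot k+m-3) and m <> 1.  By induction
   hA = {0, ..., hk-2} u {hk}, a set with exactly hk elements. *)

Local Open Scope ring_scope.

Definition gapped_range (n : nat) : seq int :=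
  [seq i%:Z | i <- iota 0 n.-1] ++ [:: n%:Z].

Lemma mem_gapped_range (n : nat) (a : int) :
  (a \in gapped_range n) = (0 <= a <= n%:Z - 2) || (a == n%:Z).
Proof.
rewrite mem_cat mem_seq1; congr (_ || _).
apply/mapP/idP => [[i]|]; first by rewrite mem_iota; lia.
case: a => // i le_in; exists i => //; rewrite mem_iota; lia.
Qed.

Lemma gapped_range_uniq (n : nat) : uniq (gapped_range n).
Proof.
rewrite cat_uniq /= orbF andbT map_inj_uniq ?iota_uniq; last by move=> i j [].
by apply/mapP => -[i]; rewrite mem_iota => ? []; lia.
Qed.

Lemma size_gapped_range (n : nat) : (0 < n)%N -> size (gapped_range n) = n.
Proof. by rewrite size_cat size_map size_iota addn1 => /prednK. Qed.

Lemma mem_add_gapped_range (k m : nat) : (3 <= k)%N -> m != 1%N ->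
  [seq a + b | a <- gapped_range k, b <- gapped_range m] =i gapped_range (k + m).
Proof.
move=> k_ge3 m_neq1 n; apply/allpairsP/idP => [[[a b] /= [+ + ->]]|].
  by rewrite !mem_gapped_range; lia.
rewrite mem_gapped_range => n_in.
have [m_le_n|n_lt_m] := lerP m%:Z n.
  by exists (n - m%:Z, m%:Z); rewrite /= !mem_gapped_range; split; lia.
have [n_le|n_gt] := lerP n (k%:Z - 2).
  by exists (n, 0); rewrite /= !mem_gapped_range; split; lia.
by exists (k%:Z - 2, n - k%:Z + 2); rewrite /= !mem_gapped_range; split; lia.
Qed.

Lemma mem_hfold_gapped_range (k h : nat) : (3 <= k)%N ->
  hfold (gapped_range k) h =i gapped_range (h * k).
Proof.
move=> k_ge3; elim: h => [|h IHh] n //=.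
rewrite (mem_allpairs _ (frefl _) IHh) mem_add_gapped_range ?mulSn //.
by rewrite muln_eq1 (gtn_eqF (ltnW k_ge3)) andbF.
Qed.

Lemma size_sumset_gapped_range (k h : nat) : (3 <= k)%N ->
  size (sumset h (gapped_range k)) = size (gapped_range (h * k)).
Proof.
move=> k_ge3; apply/perm_size/uniq_perm; rewrite ?undup_uniq ?gapped_range_uniq //.
by move=> n; rewrite mem_undup mem_hfold_gapped_range.
Qed.

Theorem mainTheorem9 (h k : nat) : (2 <= h)%N -> (3 <= k)%N -> in_RZ h k (h * k).
Proof.
move=> h_ge2 k_ge3; exists (gapped_range k); split; [|split].
- exact: gapped_range_uniq.
- by rewrite size_gapped_range //; lia.
- by rewrite size_sumset_gapped_range // size_gapped_range //; lia.
Qed.
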